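(* Let $M\ge 2$ modalities be given, with latent representations $z^{(1)},\ldots,z^{(M)}\in\mathbb{R}^d$ (Euclidean norm $\|\cdot\|_2$; $\mathrm{dist}(x,\mathcal{S})=\inf_{s\in\mathcal{S}}\|x-s\|_2$, $\mathcal{B}(\mathcal{S},r)=\{x:\mathrm{dist}(x,\mathcal{S})\le r\}$). Let $\epsilon>0$, $\delta>2\epsilon$, and for each modality $m$ and class $c\in\{1,\ldots,K\}$ let $\mathcal{M}_c^{(m)}\subset\mathbb{R}^d$ be nonempty sets with $\inf_{u\in\mathcal{M}_i^{(m)},v\in\mathcal{M}_j^{(m)}}\|u-v\|_2\ge\delta$ for all $m$ and $i\neq j$. Fix a modality $B$ and classes $y\neq k$ with $z^{(B)}\in\mathcal{B}(\mathcal{M}_k^{(B)},\epsilon)$. Suppose that for every modality $n\neq B$ one has $z^{(n)}\in\mathcal{B}(\mathcal{M}_y^{(n)},\epsilon)$ and the map $\Phi_{n\to B}:\mathbb{R}^d\to\mathbb{R}^d$ is $\xi$-semantically consistent with $\xi\le\epsilon$, i.e. $\mathrm{dist}(\Phi_{n\to B}(u),\mathcal{M}_y^{(B)})\le\xi$ for all $u\in\mathcal{B}(\mathcal{M}_y^{(n)},\epsilon)$. Let $\lambda\ge0$, $\kappa>0$, $\theta_r\in\mathbb{R}$, $\epsilon_\gamma>0$, let $\mathcal{E}_{\mathrm{intra}}^{(n)}\in\mathbb{R}$ be arbitrary, let $\sigma$ be the logistic sigmoid, and define $$\mathcal{E}_{\mathrm{inter}}^{(n\to B)}=\|\Phi_{n\to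 B}(z^{(n)})-z^{(B)}\|_2^2,\qquad \gamma_{\mathrm{int}}^{(B)}=\lambda\sum_{n\neq B}\sigma\big(\theta_r-\mathcal{E}_{\mathrm{intra}}^{(n)}\big)\exp\!\Big(-\frac{\mathcal{E}_{\mathrm{inter}}^{(n\to B)}}{\kappa}\Big),\qquad \tilde{\gamma}_{\mathrm{int}}^{(B)}=\gamma_{\mathrm{int}}^{(B)}+\epsilon_\gamma.$$ Then, with $D=(\delta-2\epsilon)^2$, $$\gamma_{\mathrm{int}}^{(B)}\le\lambda(M-1)\exp\!\Big(-\frac{D}{\kappa}\Big),\qquad\text{and consequently}\qquad \tilde{\gamma}_{\mathrm{int}}^{(B)}\le\lambda(M-1)\exp\!\Big(-\frac{D}{\kappa}\Big)+\epsilon_\gamma.$$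
   Context: This is the multimodal fusion setting: $\gamma_{\mathrm{int}}^{(B)}$ is the interaction gate of modality $B$, aggregating cross-modal consensus from the other modalities $n$, weighted by reliability scores $r^{(n)}=\sigma(\theta_r-\mathcal{E}_{\mathrm{intra}}^{(n)})\in[0,1]$ where $\mathcal{E}_{\mathrm{intra}}^{(n)}$ is an intra-modal transport cost; $\epsilon_\gamma$ is a small numerical floor. The hypothesis says modality $B$ encodes a class $k$ that conflicts with the class $y$ encoded by every other (reliable, semantically consistent) modality. *)

From HB Require Import structures.
From mathcomp Require Import all_boot all_order all_algebra.
From mathcomp Require Import all_classical all_reals all_analysis.
Set Implicit Arguments. Unset Strict Implicit. Unset Printing Implicit Defensive.
Import Order.TTheory GRing.Theory Num.Theory.
Local Open Scope classical_set_scope.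
Local Open Scope ring_scope.

Definition norm2 {R : realType} {d : nat} (x : 'rV[R]_d) : R :=
  Num.sqrt (\sum_(i < d) (x ord0 i) ^+ 2).

Definition dist {R : realType} {d : nat} (x : 'rV[R]_d) (S : set 'rV[R]_d) : R :=
  inf [set norm2 (x - s) | s in S].

Definition nbhd_set {R : realType} {d : nat} (S : set 'rV[R]_d) (r : R) : set 'rV[R]_d :=
  [set x | dist x S <= r].

Definition set_gap {R : realType} {d : nat} (S T : set 'rV[R]_d) : R :=
  inf [set norm2 (u - v) | u in S & v in T].

Definition sigmoid {R : realType} (t : R) : R := 1 / (1 + expR (- t)).

Definition E_inter {R : realType} {d : nat} (Phi : 'rV[R]_d -> 'rV[R]_d)
  (zn zB : 'rV[R]_d) : R := (norm2 (Phi zn - zB)) ^+ 2.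

Definition gamma_int {R : realType} {d M : nat} (lam kappa theta_r : R)
  (E_intra : 'I_M -> R) (Phi : 'I_M -> 'I_M -> 'rV[R]_d -> 'rV[R]_d)
  (z : 'I_M -> 'rV[R]_d) (B : 'I_M) : R :=
  lam * \sum_(n < M | n != B)
     sigmoid (theta_r - E_intra n) * expR (- (E_inter (Phi n B) (z n) (z B) / kappa)).

Definition gamma_int_tilde {R : realType} {d M : nat} (lam kappa theta_r eps_g : R)
  (E_intra : 'I_M -> R) (Phi : 'I_M -> 'I_M -> 'rV[R]_d -> 'rV[R]_d)
  (z : 'I_M -> 'rV[R]_d) (B : 'I_M) : R :=
  gamma_int lam kappa theta_r E_intra Phi z B + eps_g.

From HB Require Import structures.
From mathcomp Require Import all_boot all_order all_algebra.
From mathcomp Require Import all_classical all_reals all_analysis.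
From mathcomp Require Import lra.
Set Implicit Arguments. Unset Strict Implicit. Unset Printing Implicit Defensive.
Import Order.TTheory GRing.Theory Num.Theory.
Local Open Scope classical_set_scope.
Local Open Scope ring_scope.

(* The consistency map sends z^(n) within xi <= eps of the class-y manifold of
   modality B, while z^(B) lies within eps of its class-k manifold; as these
   two manifolds are delta-separated, the triangle inequality gives
   ||Phi(z^(n)) - z^(B)|| >= delta - 2 eps, i.e. E_inter >= D.  Hence every
   exponential factor of the gate is at most exp(-D/kappa), every reliability
   sigmoid is at most 1, and there are M - 1 summands. *)

Section EuclideanNorm.
Variables (R : realType) (d : nat).
Implicit Types x y : 'rV[R]_d.

Lemma norm2_ge0 x : 0 <= norm2 x.
Proof. exact: sqrtr_ge0. Qed.

Lemma norm2_sqr x : norm2 x ^+ 2 = \sum_(i < d) x ord0 i ^+ 2.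
Proof. by rewrite sqr_sqrtr // sumr_ge0 // => i _; exact: sqr_ge0. Qed.

Lemma norm2_eq0 x : norm2 x = 0 -> x = 0.
Proof.
move=> /(congr1 (fun r => r ^+ 2)); rewrite norm2_sqr expr0n /= => sum0.
apply/rowP => i; rewrite mxE; apply/eqP; rewrite -sqrf_eq0; apply/eqP.
exact: (psumr_eq0P (fun j _ => sqr_ge0 (x ord0 j)) sum0).
Qed.

Lemma norm2N x : norm2 (- x) = norm2 x.
Proof. by rewrite /norm2; congr Num.sqrt; apply: eq_bigr => i _; rewrite mxE sqrrN. Qed.

Lemma norm2_sym x y : norm2 (x - y) = norm2 (y - x).
Proof. by rewrite -norm2N opprB. Qed.

Lemma norm2_CauchySchwarz x y :
  \sum_(i < d) x ord0 i * y ord0 i <= norm2 x * norm2 y.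
Proof.
have [/norm2_eq0 -> | x0] := eqVneq (norm2 x) 0.
  by rewrite big1 ?mulr_ge0 ?norm2_ge0 // => i _; rewrite mxE mul0r.
have [/norm2_eq0 -> | y0] := eqVneq (norm2 y) 0.
  by rewrite big1 ?mulr_ge0 ?norm2_ge0 // => i _; rewrite mxE mulr0.
set s := norm2 x; set t := norm2 y.
have st_gt0 : 0 < s * t by rewrite mulr_gt0 // lt0r ?x0 ?y0 norm2_ge0.
(* termwise AM-GM: 2 s t x_i y_i <= t^2 x_i^2 + s^2 y_i^2 *)
have amgm : \sum_(i < d) 2 * s * t * (x ord0 i * y ord0 i)
    <= \sum_(i < d) (t ^+ 2 * x ord0 i ^+ 2 + s ^+ 2 * y ord0 i ^+ 2).
  apply: ler_sum => i _; have := sqr_ge0 (t * x ord0 i - s * y ord0 i); nra.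
rewrite -mulr_sumr big_split /= -!mulr_sumr -!norm2_sqr -/s -/t in amgm.
nra.
Qed.

Lemma norm2D x y : norm2 (x + y) <= norm2 x + norm2 y.
Proof.
have sumD : 0 <= norm2 x + norm2 y by rewrite addr_ge0 ?norm2_ge0.
rewrite -(ger0_norm sumD) -sqrtr_sqr ler_sqrt ?sqr_ge0 //.
have -> : \sum_(i < d) (x + y) ord0 i ^+ 2 = norm2 x ^+ 2 + norm2 y ^+ 2
    + 2 * \sum_(i < d) x ord0 i * y ord0 i.
  rewrite !norm2_sqr mulr_sumr -!big_split /=.
  by apply: eq_bigr => i _; rewrite mxE sqrrD; lra.
have := norm2_CauchySchwarz x y; nra.
Qed.

Lemma norm2_triangle x y w : norm2 (x - w) <= norm2 (x - y) + norm2 (y - w).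
Proof. by move: (norm2D (x - y) (y - w)); rewrite addrA subrK. Qed.

End EuclideanNorm.

Section SetDistance.
Variables (R : realType) (d : nat).
Implicit Types (S T : set 'rV[R]_d) (u v : 'rV[R]_d).

Lemma lb_le_dist S u r :
  S !=set0 -> (forall s, S s -> r <= norm2 (u - s)) -> r <= dist u S.
Proof.
move=> [s Ss] lb; apply: lb_le_inf => [|_ [t St <-]]; last exact: lb.
by exists (norm2 (u - s)), s.
Qed.

Lemma set_gap_le_norm2 S T s t : S s -> T t -> set_gap S T <= norm2 (s - t).
Proof.
move=> Ss Tt; apply: ge_inf; last by exists s => //; exists t.
by exists 0 => _ [s' _ [t' _ <-]]; exact: norm2_ge0.
Qed.

Lemma set_gap_le_dist S T u v : S !=set0 -> T !=set0 ->
  set_gap S T <= dist u S + norm2 (u - v) + dist v T.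
Proof.
move=> S0 T0.
have gap_le s : S s -> set_gap S T - norm2 (s - v) <= dist v T.
  move=> Ss; apply: lb_le_dist => // t Tt.
  have := set_gap_le_norm2 Ss Tt; have := norm2_triangle s v t; lra.
suff : set_gap S T - norm2 (u - v) - dist v T <= dist u S by lra.
apply: lb_le_dist => // s Ss.
have := gap_le s Ss; have := norm2_triangle s u v; rewrite (norm2_sym s u); lra.
Qed.

Lemma sqr_le_E_inter (Phi : 'rV[R]_d -> 'rV[R]_d) zn zB S T r :
  S !=set0 -> T !=set0 -> 0 <= r ->
  r + dist (Phi zn) S + dist zB T <= set_gap S T -> r ^+ 2 <= E_inter Phi zn zB.
Proof.
move=> S0 T0 r0 gap; rewrite /E_inter lerXn2r ?nnegrE ?norm2_ge0 //.
have := set_gap_le_dist (Phi zn) zB S0 T0; lra.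
Qed.

End SetDistance.

Section Gate.
Variable R : realType.

Lemma sigmoid_ge0 (t : R) : 0 <= sigmoid t.
Proof. by rewrite /sigmoid div1r invr_ge0 addr_ge0 // expR_ge0. Qed.

Lemma sigmoid_le1 (t : R) : sigmoid t <= 1.
Proof.
rewrite /sigmoid div1r invf_le1; last by rewrite ltr_wpDr // expR_ge0.
by rewrite lerDl expR_ge0.
Qed.

Lemma sigmoid_mul_expR_le (t e D kappa : R) : 0 < kappa -> D <= e ->
  sigmoid t * expR (- (e / kappa)) <= expR (- (D / kappa)).
Proof.
move=> kappa0 De; rewrite -[leRHS]mul1r.
apply: ler_pM; rewrite ?sigmoid_ge0 ?expR_ge0 ?sigmoid_le1 //.
by rewrite ler_expR lerN2 ler_pM2r ?invr_gt0.
Qed.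

Lemma gamma_int_le_uniform d M (lam kappa theta_r c : R) (E_intra : 'I_M -> R)
    (Phi : 'I_M -> 'I_M -> 'rV[R]_d -> 'rV[R]_d) (z : 'I_M -> 'rV[R]_d) (B : 'I_M) :
  0 <= lam ->
  (forall n, n != B -> sigmoid (theta_r - E_intra n)
     * expR (- (E_inter (Phi n B) (z n) (z B) / kappa)) <= c) ->
  gamma_int lam kappa theta_r E_intra Phi z B <= lam * (M - 1)%:R * c.
Proof.
move=> lam0 term_le; rewrite /gamma_int -mulrA ler_wpM2l //.
apply: le_trans (ler_sum _ term_le) _.
by rewrite (sumr_const (predC1 B)) cardC1 card_ord subn1 mulr_natl.
Qed.

End Gate.

Theorem corollary4p5 (R : realType) (d M K : nat) (hM : (2 <= M)%N)
  (z : 'I_M -> 'rV[R]_d) (eps delta : R) (heps : 0 < eps) (hdelta : 2 * eps < delta)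
  (Man : 'I_M -> 'I_K -> set 'rV[R]_d)
  (hne : forall m c, Man m c !=set0)
  (hsep : forall m (i j : 'I_K), i != j -> delta <= set_gap (Man m i) (Man m j))
  (B : 'I_M) (y k : 'I_K) (hyk : y != k)
  (hzB : nbhd_set (Man B k) eps (z B))
  (Phi : 'I_M -> 'I_M -> 'rV[R]_d -> 'rV[R]_d) (xi : R) (hxi : xi <= eps)
  (hzn : forall n, n != B -> nbhd_set (Man n y) eps (z n))
  (hcons : forall n, n != B -> forall u, nbhd_set (Man n y) eps u ->
       dist (Phi n B u) (Man B y) <= xi)
  (lam kappa theta_r eps_g : R) (hlam : 0 <= lam) (hkappa : 0 < kappa)
  (heps_g : 0 < eps_g) (E_intra : 'I_M -> R) :
  let D := (delta - 2 * eps) ^+ 2 in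
  gamma_int lam kappa theta_r E_intra Phi z B
    <= lam * (M - 1)%:R * expR (- (D / kappa)) /\
  gamma_int_tilde lam kappa theta_r eps_g E_intra Phi z B
    <= lam * (M - 1)%:R * expR (- (D / kappa)) + eps_g.
Proof.
move=> D.
have gap := hsep B y k hyk.
have term_le n : n != B -> sigmoid (theta_r - E_intra n)
    * expR (- (E_inter (Phi n B) (z n) (z B) / kappa)) <= expR (- (D / kappa)).
  move=> nB; apply: sigmoid_mul_expR_le => //.
  apply: sqr_le_E_inter (hne B y) (hne B k) _ _; first lra.
  have := hcons n nB (z n) (hzn n nB); move: hzB; rewrite /nbhd_set /=; lra.
have gamma_le := gamma_int_le_uniform hlam term_le.
by split; rewrite // /gamma_int_tilde lerD2r.
Qed.
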